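(* In the setting below, if $\mathbb{E}\big[|\eta(X^x_m)-\eta(x)|\big]\to 0$ as $m\to\infty$, then $x$ is a Lebesgue point for $\eta$ with respect to $\mathbb{P}_X$. This holds for any choice of nearest neighbors $X^x_m$, i.e. regardless of how ties are broken.
   Context: Let $(\mathcal{X},d)$ be a metric space with its Borel $\sigma$-algebra, let $(\Omega,\mathcal{F},\mathbb{P})$ be a probability space, and let $X,X_1,X_2,\dots$ be i.i.d. $\mathcal{X}$-valued random variables with common law $\mathbb{P}_X$. For $x\in\mathcal{X}$ and $r>0$ write $B_r=\{x':d(x,x')<r\}$, $\bar B_r=\{x':d(x,x')\le r\}$ and $S_r=\{x':d(x,x')=r\}$. The support of $\mathbb{P}_X$ is the set of $x$ such that $\mathbb{P}_X(\bar B_r(x))>0$ for all $r>0$. Fix $x$ in the support of $\mathbb{P}_X$ and a bounded measurable $\eta:\mathcal{X}\to\mathbb{R}$. For each $m\in\mathbb{N}$, a nearest neighbor of $x$ among $X_1,\dots,X_m$ is a measurable $X^x_m:\Omega\to\mathcal{X}$ with $X^x_m(\omega)\in\arg\min_{x'\in\{X_1(\omega),\dots,X_m(\omega)\}}d(x,x')$ for every $\omega\in\Omega$; fix such a sequence $(X^x_m)_{m\in\mathbb{N}}$. The point $x$ is a Lebesgue point (for $\eta$ with respect to $\mathbb{P}_X$) if $\mathbb{E}[\mathbb{I}_{\bar B_r}(X)\,|\eta(X)-\eta(x)|]/\mathbb{P}_X(\bar B_r)\to 0$ as $r\to 0^+$. *)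

From HB Require Import structures.
From mathcomp Require Import all_boot all_order all_algebra finmap.
From mathcomp Require Import all_classical all_reals all_analysis.
Set Implicit Arguments. Unset Strict Implicit. Unset Printing Implicit Defensive.
Import Order.TTheory GRing.Theory Num.Theory.
Local Open Scope classical_set_scope.
Local Open Scope ring_scope.

(* A metric space (with a chosen inhabitant, needed by MathComp-Analysis to
   put a measurable structure on it). *)
#[short(type="pointedMetricType")]
HB.structure Definition PointedMetric (R : numDomainType) :=
  { M of Pointed M & Metric R M }.

Definition borel {R : realType} (T : pointedMetricType R) :=
  g_sigma_algebraType (@open T).

Definition cball {R : realType} {T : pointedMetricType R} (x : T) (r : R)
  : set (borel T) := [set y | mdist x y <= r].

Definition law {R : realType} {T : pointedMetricType R} d (Omega : measurableType d)
  (P : probability Omega R) (X : Omega -> T) : set (borel T) -> \bar R :=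
  pushforward P (X : Omega -> borel T).

Definition iid {R : realType} {T : pointedMetricType R} d (Omega : measurableType d)
  (P : probability Omega R) (Y : nat -> Omega -> T) : Prop :=
  (forall i, measurable_fun setT (Y i : Omega -> borel T)) /\
  (forall i, law P (Y i) = law P (Y 0%N)) /\
  (forall (I : {fset nat}) (B : nat -> set (borel T)),
      (forall i, i \in I -> measurable (B i)) ->
      P (\bigcap_(i in [set` I]) (Y i @^-1` B i))
      = (\prod_(i <- I) P (Y i @^-1` B i))%E).

Definition in_support {R : realType} {T : pointedMetricType R} d
  (Omega : measurableType d) (P : probability Omega R) (X : Omega -> T) (x : T) :=
  forall r : R, 0 < r -> (0 < law P X (cball x r))%E.

(* NN is a (measurable) nearest-neighbour sequence of x among Xs 1, Xs 2, ...:
   NN m is a nearest neighbour of x among Xs 1, ..., Xs (m+1)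
   (i.e. NN m plays the role of X^x_(m+1) of the paper). *)
Definition nearest_neighbors {R : realType} {T : pointedMetricType R} d
  (Omega : measurableType d) (Xs : nat -> Omega -> T) (x : T)
  (NN : nat -> Omega -> T) : Prop :=
  forall m : nat,
    measurable_fun setT (NN m : Omega -> borel T) /\
    forall w : Omega,
      (exists2 i, (1 <= i <= m.+1)%N & NN m w = Xs i w) /\
      (forall j, (1 <= j <= m.+1)%N -> mdist x (NN m w) <= mdist x (Xs j w)).

Definition lebesgue_point {R : realType} {T : pointedMetricType R} d
  (Omega : measurableType d) (P : probability Omega R) (X : Omega -> T)
  (eta : T -> R) (x : T) : Prop :=
  (fun r : R =>
     fine (\int[P]_w ((\1_(cball x r) (X w) : R) * `|eta (X w) - eta x|)%:E)
     / fine (law P X (cball x r))) @ 0^'+ --> 0.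

From HB Require Import structures.
From mathcomp Require Import all_boot all_order all_algebra finmap.
From mathcomp Require Import all_classical all_reals all_analysis.
From mathcomp Require Import lra measurable_realfun.
Set Implicit Arguments. Unset Strict Implicit. Unset Printing Implicit Defensive.
Import Order.TTheory GRing.Theory Num.Theory.
Local Open Scope classical_set_scope.
Local Open Scope ring_scope.

(* Write [p r = P(X in B_r)] and, for a level [t > 0], [q r = P(X in B_r,
   |eta X - eta x| > t)].  Bounding the integrand by [t] on the ball and by
   [K = 2 sup |eta|] on the deviation region gives
   [E[1_{B_r}(X) |eta X - eta x|] <= t p r + K q r], so it suffices that
   [q r <= del * p r] for small [r].  The probabilistic input is a lower bound
   on the law of the nearest neighbour: among [N] samples, the events "only
   sample [i] lies in [B_r], and it lies in the deviation region" are disjoint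
   and each has probability [q r (1 - p r)^(N-1)] by independence, so the
   nearest neighbour falls in the deviation region with probability at least
   [N q (1 - p)^(N-1)].  By Markov this is at most [E|eta(X^x_N) - eta x| / t],
   which is small for large [N]; choosing [N ~ 1/(2 p r)] and Bernoulli's
   inequality turn this into [q r <= del * p r].  Balls that are not small in mass are
   handled by continuity from above, since the deviation region avoids [x]. *)

Lemma prod_single_seq (R : comNzRingType) (s : seq nat) (i : nat) (a b : R) :
  uniq s -> i \in s ->
  \prod_(j <- s) (if j == i then a else b) = a * b ^+ (size s).-1.
Proof.
move=> us is_; rewrite (bigD1_seq i) //= eqxx; congr (_ * _).
rewrite (eq_bigr (fun=> b)) => [|j /negPf -> //].
rewrite big_const_seq iter_mulr_1; congr (_ ^+ _).
by rewrite -(count_predC (pred1 i)) count_uniq_mem // is_ add1n.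
Qed.

Section MetricBorel.
Variables (R : realType) (T : pointedMetricType R).

Lemma open_mdist_gt (x : T) (r : R) : open [set y : T | r < mdist x y].
Proof.
rewrite openE => y /= ry; apply/nbhs_ballP.
exists (mdist x y - r) => /=; first by rewrite subr_gt0.
move=> z; rewrite ballEmdist /= => yz.
have := metric_triangle x z y; rewrite (metric_sym z y); lra.
Qed.

Lemma measurable_cball (x : T) (r : R) : measurable (cball x r).
Proof.
have -> : cball x r = ~` [set y : T | r < mdist x y].
  apply/seteqP; split => y; rewrite /cball /= ltNge; first by move=> ->.
  by move/negP/negbNE.
by apply: measurableC; apply: sub_sigma_algebra; exact: open_mdist_gt.
Qed.

Lemma measurable_preimage d (Omega : measurableType d) (f : Omega -> T)
    (A : set (borel T)) :
  measurable_fun setT (f : Omega -> borel T) -> measurable A ->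
  measurable (f @^-1` A).
Proof. by move=> mf mA; rewrite -(setTI (f @^-1` A)); exact: mf. Qed.

End MetricBorel.
Arguments measurable_cball {R T}.
Arguments measurable_preimage {R T d Omega f A}.

Section NearestNeighborMass.
Variables (R : realType) (T : pointedMetricType R) (d : measure_display).
Variables (Omega : measurableType d) (P : probability Omega R).
Variables (Xs : nat -> Omega -> T) (x : T) (NN : nat -> Omega -> T).
Hypothesis iidXs : iid P Xs.
Hypothesis nnNN : nearest_neighbors Xs x NN.

Variables (r : R) (C : set (borel T)) (m : nat).
Hypothesis mC : measurable C.
Hypothesis CB : C `<=` cball x r.

Let B := cball x r.
Let I := seq_fset tt (iota 1 m.+1).

Let in_I (j : nat) : (j \in I) = (1 <= j <= m.+1)%N.
Proof. by rewrite seq_fsetE mem_iota add1n ltnS. Qed.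

Let target (i j : nat) : set (borel T) := if j == i then C else ~` B.
Definition only_in (i : nat) : set Omega :=
  \bigcap_(j in [set` I]) (Xs j @^-1` target i j).

Let measurable_target (i j : nat) : measurable (target i j).
Proof.
by rewrite /target; case: (j == i) => //; apply: measurableC; exact: measurable_cball.
Qed.

Let measurable_only_in (i : nat) : measurable (only_in i).
Proof.
apply: fin_bigcap_measurable; first exact: finite_fset.
by move=> j _; exact: (measurable_preimage (iidXs.1 j) (measurable_target i j)).
Qed.

Lemma only_in_prob (i : nat) : (1 <= i <= m.+1)%N ->
  P (only_in i) = (fine (P (Xs 0%N @^-1` C)) *
                   (1 - fine (P (Xs 0%N @^-1` B))) ^+ m)%:E.
Proof.
have [mX [lawX indep]] := iidXs.
move=> hi; rewrite /only_in indep //.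
rewrite (eq_big_seq (fun j => (if j == i then fine (P (Xs 0%N @^-1` C))
                               else 1 - fine (P (Xs 0%N @^-1` B)))%:E)).
  rewrite prodEFin (perm_big (iota 1 m.+1)); last first.
    by rewrite (perm_trans (seq_fset_perm _ _)) // undup_id // iota_uniq.
  by rewrite prod_single_seq ?iota_uniq ?mem_iota ?size_iota //= add1n ltnS.
move=> j _; have -> : P (Xs j @^-1` target i j) = law P (Xs j) (target i j) by [].
have mXC := measurable_preimage (mX 0%N) mC.
have mXB := measurable_preimage (mX 0%N) (measurable_cball x r).
rewrite lawX /law /pushforward /target; case: (j == i).
  by rewrite fineK // fin_num_measure.
rewrite -[_ @^-1` ~` _]/(~` (Xs 0%N @^-1` B)) probability_setC //.
by rewrite EFinB fineK // fin_num_measure.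
Qed.

(* On [only_in i], the nearest neighbour lies in [B], and the only sample in [B]
   is [Xs i], so the nearest neighbour is [Xs i], which lies in [C]. *)
Lemma only_in_sub_nn (i : nat) : (1 <= i <= m.+1)%N ->
  only_in i `<=` NN m @^-1` C.
Proof.
move=> hi w Ew; have [[k hk NNk] hmin] := (nnNN m).2 w.
have XiC : C (Xs i w) by have := Ew i; rewrite /target eqxx; apply; rewrite /= in_I.
rewrite /preimage /= NNk; have [-> //|ki] := eqVneq k i.
have XkB : B (Xs k w).
  by rewrite /B /cball /= -NNk; apply: le_trans (hmin i hi) _; exact: CB.
by have := Ew k; rewrite /target (negbTE ki) /= in_I => /(_ hk).
Qed.

Lemma only_in_disjoint :
  trivIset [set: 'I_m.+1] (fun k : 'I_m.+1 => only_in k.+1).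
Proof.
move=> i j _ _ [w [Ei Ej]]; apply/val_inj/eqP; rewrite -eqSS.
apply/negP => /negP ij; have ji : (j.+1 == i.+1) = false by rewrite eq_sym; apply/negbTE.
have := Ei j.+1; rewrite /target ji /= in_I ltn_ord => /(_ isT); apply.
by have := Ej j.+1; rewrite /target eqxx /= in_I ltn_ord => /(_ isT) /CB.
Qed.

(* The nearest neighbour among [m+1] samples falls in [C] with probability at
   least [(m+1) P(X in C) (1 - P(X in B))^m]: sum over the disjoint events
   [only_in i]. *)
Lemma nn_mass_lower_bound :
  (((m.+1)%:R * fine (P (Xs 0%N @^-1` C)) *
     (1 - fine (P (Xs 0%N @^-1` B))) ^+ m)%:E <= P (NN m @^-1` C))%E.
Proof.
set U := \big[setU/set0]_(k < m.+1) only_in k.+1.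
have mU : measurable U by apply: bigsetU_measurable.
have mNC : measurable (NN m @^-1` C).
  by apply: measurable_preimage => //; exact: (nnNN m).1.
have UC : U `<=` NN m @^-1` C.
  apply: (big_ind (fun S => S `<=` NN m @^-1` C)) => //.
    by move=> A1 A2 h1 h2 w [/h1|/h2].
  by move=> k _; apply: only_in_sub_nn; rewrite ltn_ord.
apply: le_trans (le_measure P (mem_set mU) (mem_set mNC) UC).
rewrite /U measure_bigsetU_ord //; last exact: only_in_disjoint.
rewrite (eq_bigr _ (fun (i : 'I_m.+1) _ => @only_in_prob i.+1 (ltn_ord i))).
by rewrite sumEFin sumr_const card_ord -mulrA mulr_natl.
Qed.

End NearestNeighborMass.

Lemma markov_set (R : realType) d (Omega : measurableType d)
    (P : probability Omega R) (f : Omega -> R) (A : set Omega) (t : R) :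
  measurable_fun setT f -> measurable A -> 0 <= t ->
  (forall w, 0 <= f w) -> (forall w, A w -> t <= f w) ->
  (t%:E * P A <= \int[P]_w (f w)%:E)%E.
Proof.
move=> mf mA t0 f0 hA.
have mIA : measurable_fun setT (fun w => (\1_A w : R)) by exact: measurable_indic.
rewrite -[A]setIT -integral_indic // -ge0_integralZl_EFin //; last exact/measurable_EFinP.
apply: ge0_le_integral => //.
- by move=> w _; rewrite lee_fin mulr_ge0 // indicE; case: (w \in A).
- by apply/measurable_EFinP; apply: measurable_funM => //; exact: measurable_cst.
- exact/measurable_EFinP.
move=> w _; rewrite lee_fin indicE.
by case: (boolP (w \in A)) => [/set_mem/hA|_]; rewrite ?mulr1 ?mulr0.
Qed.

Lemma bernoulli_ineq (R : realFieldType) (p : R) (n : nat) :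
  0 <= p <= 1 -> 1 - n%:R * p <= (1 - p) ^+ n.
Proof.
move=> /andP[p0 p1]; elim: n => [|n IH]; first by rewrite mul0r subr0 expr0.
rewrite exprS -nat1r.
have h0 : 0 <= (1 - p) ^+ n by apply: exprn_ge0; lra.
have [h|h] := leP 0 (1 - n%:R * p).
  have : (1 - n%:R * p) * (1 - p) <= (1 - p) ^+ n * (1 - p).
    by apply: ler_wpM2r => //; lra.
  have : 0 <= n%:R * p * p by rewrite !mulr_ge0.
  nra.
have : 0 <= (1 - p) * (1 - p) ^+ n by apply: mulr_ge0 => //; lra.
nra.
Qed.

(* With [N ~ 1/(2p)] samples, [(1 - p)^(N-1) >= 1/2] while [N q >= q/(4p)]:
   a bound [N q (1 - p)^(N-1) <= b] therefore forces [q <= 8 b p]. *)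
Lemma mass_bound_at_scale (R : realFieldType) (p q b : R) (N : nat) :
  0 < p -> p <= 1/4 -> N%:R <= 1 / (2 * p) -> 1 / (2 * p) < N.+1%:R ->
  0 <= q -> N%:R * q * (1 - p) ^+ N.-1 <= b -> q <= 8 * b * p.
Proof.
move=> p0 p4 hN1 hN2 q0 hb.
have hNp : N%:R * p <= 1/2 by move: hN1; rewrite ler_pdivlMr ?mulr_gt0 //; nra.
have hNp2 : 1/4 <= N%:R * p by move: hN2; rewrite ltr_pdivrMr ?mulr_gt0 // -nat1r; nra.
have hN0 : (0 < N)%N by case: N hNp2 {hN1 hN2 hb hNp} => //; rewrite mul0r; lra.
have half_le : 1 / 2 <= (1 - p) ^+ N.-1.
  have p01 : 0 <= p <= 1 by apply/andP; split; lra.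
  have := bernoulli_ineq N.-1 p01.
  by move: hNp; rewrite -(prednK hN0) -nat1r; nra.
have : N%:R * q * (1/2) <= b.
  by apply: le_trans hb; apply: ler_wpM2l => //; apply: mulr_ge0.
nra.
Qed.

Lemma cvg0_eventually_le (R : realType) (u : nat -> \bar R) (e : R) :
  0 < e -> u @ \oo --> 0%E -> \forall m \near \oo, (u m <= e%:E)%E.
Proof.
move=> e0 /fine_cvgP[finu cvgu].
near=> m; have /fineK <- : u m \is a fin_num by near: m.
rewrite lee_fin; apply: le_trans (ler_norm _) _.
have : `|0 - fine (u m)| <= e by near: m; exact: (cvgrPdist_le _ _).1 cvgu e e0.
by rewrite sub0r normrN.
Unshelve. all: by end_near.
Qed.

Lemma le_inv_succ_eq0 (R : archiRealFieldType) (a : R) :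
  0 <= a -> (forall n : nat, a <= n.+1%:R^-1) -> a = 0.
Proof.
move=> a0 h; apply/eqP; rewrite eq_le a0 andbT leNgt; apply/negP => apos.
have ia : 0 <= a^-1 by rewrite invr_ge0 ltW.
have := truncn_itv ia => /andP[_ hn].
have := h (Num.truncn a^-1); rewrite -[leLHS](invrK a) lef_pV2 ?posrE ?invr_gt0 //; lra.
Qed.

Section SmallBalls.
Variables (R : realType) (T : pointedMetricType R) (d : measure_display).
Variables (Omega : measurableType d) (P : probability Omega R).
Variables (X : Omega -> T) (x : T).
Hypothesis mX : measurable_fun setT (X : Omega -> borel T).

(* Continuity from above: the balls [cball x r] shrink to [{x}], so the mass
   they give to a measurable set [S] avoiding [x] vanishes as [r -> 0+]. *)
Lemma ball_mass_vanishes (S : set (borel T)) (e : R) :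
  measurable S -> ~ S x -> 0 < e ->
  \forall r \near 0^'+, fine (P (X @^-1` (cball x r `&` S))) <= e.
Proof.
move=> mS Sx e0; pose F n := X @^-1` (cball x (n.+1%:R^-1) `&` S).
have mF n : measurable (F n).
  exact: measurable_preimage mX (measurableI _ _ (measurable_cball _ _) mS).
have F_empty : \bigcap_n F n = set0.
  apply/seteqP; split => // w /= hw.
  suff Xwx : X w = x by have [_] := hw 0%N I; rewrite Xwx.
  apply/esym/mdist_positivity/le_inv_succ_eq0; first exact: mdist_ge0.
  by move=> n; have [] := hw n I.
have : (P \o F) n @[n --> \oo] --> P (\bigcap_n F n).
  apply: nonincreasing_cvg_mu => //.
  - by apply: le_lt_trans (probability_le1 _ (mF 0%N)) _; rewrite ltry.
  - by rewrite F_empty.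
  - move=> n k nk; apply/subsetPset => w [/= hw Sw]; split => //.
    by apply: le_trans hw _; rewrite lef_pV2 ?posrE // ler_nat.
rewrite F_empty measure0 => /(cvg0_eventually_le e0) [n0 _ hn0].
near=> r.
have sub_F : X @^-1` (cball x r `&` S) `<=` F n0.
  move=> w [hw Sw]; split => //; apply: le_trans hw _.
  by near: r; exact: nbhs_right_le.
have mr : measurable (X @^-1` (cball x r `&` S)).
  exact: measurable_preimage mX (measurableI _ _ (measurable_cball _ _) mS).
rewrite -lee_fin fineK ?fin_num_measure //; apply: le_trans (hn0 n0 (leqnn _)).
exact: le_measure (mem_set mr) (mem_set (mF n0)) sub_F.
Unshelve. all: by end_near.
Qed.

Lemma ball_mass_pos (r : R) :
  in_support P X x -> 0 < r -> 0 < fine (P (X @^-1` cball x r)).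
Proof.
move=> supp r0; apply: fine_gt0; apply/andP; split; first exact: supp r r0.
apply: le_lt_trans (probability_le1 _ _) (ltry 1).
exact: measurable_preimage mX (measurable_cball x r).
Qed.

End SmallBalls.

Lemma integral_cst_indic (R : realType) d (Omega : measurableType d)
    (P : probability Omega R) (A : set Omega) (c : R) :
  measurable A -> 0 <= c ->
  (\int[P]_w (c * \1_A w)%:E = (c * fine (P A))%:E)%E.
Proof.
move=> mA c0; rewrite (eq_integral (fun w => c%:E * (\1_A w)%:E)%E) //.
rewrite ge0_integralZl_EFin //; last exact/measurable_EFinP/measurable_indic.
by rewrite integral_indic // setIT EFinM fineK // fin_num_measure.
Qed.

Section Deviation.
Variables (R : realType) (T : pointedMetricType R).
Variables (eta : T -> R) (x : T).
Hypothesis meta : measurable_fun setT (eta : borel T -> R).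

Definition deviates (t : R) : set (borel T) := [set y | t < `|eta y - eta x|].

Lemma measurable_deviation d (Omega : measurableType d) (f : Omega -> T) :
  measurable_fun setT (f : Omega -> borel T) ->
  measurable_fun setT (fun w => `|eta (f w) - eta x|).
Proof.
move=> mf; apply: measurableT_comp; first exact: normr_measurable.
apply: measurable_funB; last exact: measurable_cst.
exact: (measurableT_comp (f := (eta : borel T -> R)) (g := (f : Omega -> borel T))).
Qed.

Lemma measurable_deviates (t : R) : measurable (deviates t).
Proof.
have -> : deviates t = (fun y : borel T => `|eta y - eta x|) @^-1` `]t, +oo[.
  by apply/seteqP; split => y /=; rewrite in_itv /= andbT.
have mdev := measurable_deviation (@measurable_id _ (borel T) setT).
by rewrite -(setTI (_ @^-1` _)); apply: mdev.
Qed.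

Lemma deviates_center (t : R) : 0 <= t -> ~ deviates t x.
Proof. by rewrite /deviates /= subrr normr0 => t0; rewrite ltNge t0. Qed.

Lemma local_deviation_bound d (Omega : measurableType d)
    (P : probability Omega R) (X : Omega -> T) (r t K : R) :
  measurable_fun setT (X : Omega -> borel T) -> 0 <= t -> 0 <= K ->
  (forall y, `|eta y - eta x| <= K) ->
  fine (\int[P]_w ((\1_(cball x r) (X w) : R) * `|eta (X w) - eta x|)%:E) <=
  t * fine (P (X @^-1` cball x r)) +
  K * fine (P (X @^-1` (cball x r `&` deviates t))).
Proof.
move=> mX t0 K0 hK; set B := cball x r; set S := deviates t.
have mXB : measurable (X @^-1` B) := measurable_preimage mX (measurable_cball x r).
have mXBS : measurable (X @^-1` (B `&` S)).
  exact: measurable_preimage mX (measurableI _ _ (measurable_cball x r) (measurable_deviates t)).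
have mind (A : set Omega) (c : R) : measurable A ->
    measurable_fun setT (fun w => (c * \1_A w)%:E).
  by move=> mA; apply/measurable_EFinP/measurable_funM => //; exact: measurable_indic.
have ind0 (A : set Omega) (c : R) w : 0 <= c -> (0 <= (c * \1_A w)%:E)%E.
  by move=> c0; rewrite lee_fin mulr_ge0 // indicE; case: (_ \in _).
set f := fun w => (\1_B (X w) : R) * `|eta (X w) - eta x|.
have f0 w : 0 <= f w by rewrite /f mulr_ge0 // indicE; case: (X w \in B).
have mf : measurable_fun setT f.
  apply: measurable_funM; first exact: measurable_indic mXB.
  exact: measurable_deviation.
have pointwise w : f w <= t * \1_(X @^-1` B) w + K * \1_(X @^-1` (B `&` S)) w.
  rewrite /f !indicE; case: (boolP (X w \in B)) => hB; last first.
    by rewrite mul0r addr_ge0 // mulr_ge0 //; case: (_ \in _).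
  rewrite (_ : w \in X @^-1` B) ?mul1r ?mulr1; last by rewrite inE; exact: set_mem.
  have [ht|ht] := leP `|eta (X w) - eta x| t.
    by rewrite ler_wpDr // mulr_ge0 //; case: (_ \in _).
  rewrite (_ : w \in X @^-1` (B `&` S)) ?mulr1; last by rewrite inE; split => //; exact: set_mem.
  by rewrite -[leLHS]add0r lerD.
have int_le : (\int[P]_w (f w)%:E <= (t * fine (P (X @^-1` B)) +
                 K * fine (P (X @^-1` (B `&` S))))%:E)%E.
  rewrite EFinD -!integral_cst_indic // -ge0_integralD //; last 4 first.
  - by move=> w _; exact: ind0.
  - exact: mind.
  - by move=> w _; exact: ind0.
  - exact: mind.
  apply: ge0_le_integral => //.
  - by move=> w _; rewrite lee_fin.
  - exact/measurable_EFinP.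
  - by apply: emeasurable_funD; exact: mind.
  - by move=> w _; rewrite -EFinD lee_fin.
have int0 : (0 <= \int[P]_w (f w)%:E)%E by apply: integral_ge0 => w _; rewrite lee_fin.
by rewrite -lee_fin fineK // ge0_fin_numE //; apply: le_lt_trans int_le _; exact: ltry.
Qed.

End Deviation.

Section Consistency.
Variables (R : realType) (T : pointedMetricType R) (d : measure_display).
Variables (Omega : measurableType d) (P : probability Omega R).
Variables (Xs : nat -> Omega -> T) (x : T) (eta : T -> R) (NN : nat -> Omega -> T).
Hypothesis iidXs : iid P Xs.
Hypothesis nnNN : nearest_neighbors Xs x NN.
Hypothesis meta : measurable_fun setT (eta : borel T -> R).
Variable t : R.
Hypothesis t0 : 0 < t.

Let X := Xs 0%N.
Let mX : measurable_fun setT (X : Omega -> borel T) := iidXs.1 0%N.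

Let ball_mass (r : R) := fine (P (X @^-1` cball x r)).
Let deviation_mass (r : R) := fine (P (X @^-1` (cball x r `&` deviates eta x t))).

(* If the expected nearest-neighbour error is at most [t b] from [m0] on,
   then on balls of small mass [p] the deviation mass is at most [8 b p]:
   take [N ~ 1/(2p)] samples, so that the nearest neighbour falls in the
   deviation region with probability [>= N q (1 - p)^(N-1)], and apply Markov. *)
Lemma small_ball_deviation_mass (b r : R) (m0 : nat) :
  (forall m, (m0 <= m)%N ->
     (\int[P]_w (`|eta (NN m w) - eta x|)%:E <= (t * b)%:E)%E) ->
  0 < ball_mass r -> ball_mass r <= 1 / (2 * m0.+2%:R) ->
  deviation_mass r <= 8 * b * ball_mass r.
Proof.
move=> hm0; set p := ball_mass r; set q := deviation_mass r => p0 p_small.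
have inv0 : 0 <= 1 / (2 * p) by rewrite divr_ge0 // mulr_ge0 //; lra.
have := truncn_itv inv0; set N := Num.truncn _ => /andP[hN1 hN2].
have hNm : (m0.+2 <= N)%N.
  rewrite -ltnS -(ltr_nat R); apply: le_lt_trans hN2.
  move: p_small; rewrite !ler_pdivlMr ?mulr_gt0 ?ltr0Sn //; lra.
have N0 : (0 < N)%N by apply: leq_trans hNm.
set C := cball x r `&` deviates eta x t.
have mC : measurable C := measurableI _ _ (measurable_cball x r) (measurable_deviates x meta t).
have mNN := (nnNN N.-1).1.
have lower := nn_mass_lower_bound iidXs nnNN N.-1 mC (@subIsetl _ _ _).
rewrite prednK // in lower.
have markov := markov_set P (measurable_deviation x meta mNN)
  (measurable_preimage mNN mC) (ltW t0) (fun w => normr_ge0 _) (fun w hw => ltW hw.2).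
have late : (m0 <= N.-1)%N by rewrite -ltnS prednK //; exact: ltnW.
have err := hm0 N.-1 late.
have hb : N%:R * q * (1 - p) ^+ N.-1 <= b.
  rewrite -(ler_pM2l t0) -lee_fin EFinM.
  exact: le_trans (lee_wpmul2l (ltW _) lower) (le_trans markov err).
apply: mass_bound_at_scale p0 _ hN1 hN2 _ _ => //.
- apply: le_trans p_small _; rewrite ler_pdivrMr ?mulr_gt0 ?ltr0Sn //.
  have : 2 <= m0.+2%:R :> R by rewrite (ler_nat R 2).
  lra.
- by apply: fine_ge0; exact: measure_ge0.
Qed.

(* For balls of small mass this is
   [small_ball_deviation_mass]; otherwise [p r] is bounded below while
   [q r] tends to [0] by continuity from above. *)
Lemma deviation_mass_negligible (del : R) :
  in_support P X x ->
  (fun m => (\int[P]_w (`|eta (NN m w) - eta x|)%:E)%E) @ \oo --> 0%E ->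
  0 < del -> \forall r \near 0^'+, deviation_mass r <= del * ball_mass r.
Proof.
move=> supp cvgNN del0.
have b0 : 0 < t * (del / 8) by rewrite mulr_gt0 // divr_gt0.
have [m0 _ hm0] := cvg0_eventually_le b0 cvgNN.
set L : R := m0.+2%:R; have L2 : 2 <= L by rewrite /L (ler_nat R 2).
have eps0 : 0 < del / (2 * L) by rewrite divr_gt0 // mulr_gt0 //; lra.
have vanish := ball_mass_vanishes P mX (measurable_deviates x meta t)
  (deviates_center (ltW t0)) eps0.
near=> r.
have r0 : 0 < r by near: r; exact: nbhs_right_gt.
have p0 : 0 < ball_mass r := ball_mass_pos mX supp r0.
have [p_small|p_large] := leP (ball_mass r) (1 / (2 * L)).
  have := small_ball_deviation_mass hm0 p0 p_small.
  by rewrite [8 * _]mulrC divfK.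
apply: le_trans (_ : del / (2 * L) <= _); first by near: r; exact: vanish.
have : del * (1 / (2 * L)) <= del * ball_mass r by rewrite ler_pM2l // ltW.
by rewrite mul1r.
Unshelve. all: by end_near.
Qed.

End Consistency.

Unset Implicit Arguments.

Theorem mainTheorem1 (R : realType) (T : pointedMetricType R)
  (d : measure_display) (Omega : measurableType d) (P : probability Omega R)
  (Xs : nat -> Omega -> T) (x : T) (eta : T -> R) (NN : nat -> Omega -> T) :
  iid P Xs ->
  in_support P (Xs 0%N) x ->
  measurable_fun setT (eta : borel T -> R) ->
  (exists M : R, forall y : T, `|eta y| <= M) ->
  nearest_neighbors Xs x NN ->
  (fun m : nat => (\int[P]_w (`|eta (NN m w) - eta x|)%:E)%E) @ \oo --> 0%E ->
  lebesgue_point P (Xs 0%N) eta x.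
Proof.
move=> iidXs supp meta [M hM] nnNN cvgNN.
set K := 2 * M.
have K0 : 0 <= K by rewrite /K mulr_ge0 // (le_trans _ (hM x)).
have hK y : `|eta y - eta x| <= K.
  by apply: le_trans (ler_normB _ _) _; rewrite /K mulr2n mulrDl mul1r lerD.
apply/cvgrPdist_le => e e0.
set t := e / 2; have t0 : 0 < t by rewrite divr_gt0.
set del := e / (2 * (K + 1)).
have del0 : 0 < del by rewrite divr_gt0 // mulr_gt0 //; lra.
have negligible := deviation_mass_negligible iidXs nnNN meta t0 supp cvgNN del0.
near=> r.
have r0 : 0 < r by near: r; exact: nbhs_right_gt.
have hq : fine (P (Xs 0%N @^-1` (cball x r `&` deviates eta x t)))
           <= del * fine (P (Xs 0%N @^-1` cball x r)).
  by near: r; exact: negligible.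
have bound := local_deviation_bound meta P r (iidXs.1 0%N) (ltW t0) K0 hK.
move: hq bound; rewrite /lebesgue_point /law /pushforward.
set q := fine (P (_ @^-1` (_ `&` _))); set p := fine (P _); set g := fine _.
move=> hq bound.
have p0 : 0 < p := ball_mass_pos (iidXs.1 0%N) supp r0.
have g0 : 0 <= g.
  by apply: fine_ge0; apply: integral_ge0 => w _; rewrite lee_fin mulr_ge0.
rewrite sub0r normrN ger0_norm ?divr_ge0 ?(ltW p0) // ler_pdivrMr //.
have hdel : del * (2 * (K + 1)) = e by rewrite /del divfK // mulf_neq0 //; lra.
have : K * q <= K * (del * p) by apply: ler_wpM2l.
rewrite /t in bound; nra.
Unshelve. all: by end_near.
Qed.
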